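(* Let $A=(Q_A,\Sigma,\delta_A,q_A,F_A)$ and $B=(Q_B,\Sigma,\delta_B,q_B,F_B)$ be NFAs such that $L(A)\cap L(B)=\emptyset$. Then there is a pattern of $A$ and $B$ if and only if there is an infinite tower of prefixes between $L(A)$ and $L(B)$.
   Context: Here $q_A,q_B$ are the initial states and $F_A,F_B$ the accepting states. The product automaton $A\times B$ has state set $Q_A\times Q_B$, initial state $(q_A,q_B)$, and transitions $(p,q)\xrightarrow{a}(p',q')$ whenever $p'\in\delta_A(p,a)$ and $q'\in\delta_B(q,a)$. A tuple $(S,\sigma,\sigma_1,\sigma_2,\tau,\tau_1,\tau_2)$ is a pattern of $A$ and $B$ if $S$ is a strongly connected component of the transition graph of $A\times B$ containing at least one edge, $\sigma,\sigma_1,\sigma_2,\tau,\tau_1,\tau_2$ are states of $A\times B$ such that: $\sigma_1\in F_A\times Q_B$ and $\tau_1\in Q_A\times F_B$; $\sigma,\sigma_2,\tau,\tau_2$ belong to $S$; there is a string $x$ such that both $\sigma_1$ and $\sigma_2$ are reachable from $\sigma$ under $x$; there is a string $y$ such that both $\tau_1$ and $\tau_2$ are reachable from $\tau$ under $y$; and $S$ is reachable from the initial state $(q_A,q_B)$. A string $v$ is a prefix of $w$, written $v\le w$, if $w=vu$ for some $u$. An infinite tower of prefixes between $K$ and $L$ is an infinite sequence $(w_i)_{i\ge1}$ with $w_1\in K\cup L$ and, for all $i$, $w_i\le w_{i+1}$, $w_i\in K$ implies $w_{i+1}\in L$, and $w_i\in L$ implies $w_{i+1}\in K$. *)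

From mathcomp Require Import all_boot.
Set Implicit Arguments. Unset Strict Implicit. Unset Printing Implicit Defensive.

Record nfa (Sigma : finType) := NFA {
  state : finType;
  delta : state -> Sigma -> {set state};
  init : state;
  final : {set state}
}.

Section NFA.
Variable Sigma : finType.

Definition delta_star (A : nfa Sigma) (p : state A) (w : seq Sigma) : {set state A} :=
  foldl (fun (S : {set state A}) a => \bigcup_(q in S) delta q a) [set p] w.

Definition reach (A : nfa Sigma) (p q : state A) (w : seq Sigma) : bool :=
  q \in delta_star p w.

Definition accepts (A : nfa Sigma) (w : seq Sigma) : bool :=
  [exists q in delta_star (init A) w, q \in final A].

Definition prod_nfa (A B : nfa Sigma) : nfa Sigma :=
  @NFA Sigma (state A * state B)%type
    (fun pq a => setX (delta pq.1 a) (delta pq.2 a))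
    (init A, init B)
    (setX (final A) (final B)).

Definition trans_edge (A : nfa Sigma) : rel (state A) :=
  fun p q => [exists a, q \in delta p a].

Definition is_scc (A : nfa Sigma) (S : {set state A}) : Prop :=
  exists s, S = [set v | connect (@trans_edge A) s v && connect (@trans_edge A) v s].

Definition pattern (A B : nfa Sigma) (S : {set state (prod_nfa A B)})
    (sg sg1 sg2 ta ta1 ta2 : state (prod_nfa A B)) : Prop :=
  [/\ is_scc S,
      (exists u v, [/\ u \in S, v \in S & trans_edge u v]),
      sg1.1 \in final A /\ ta1.2 \in final B,
      [/\ sg \in S, sg2 \in S, ta \in S & ta2 \in S] &
      [/\ (exists x, reach sg sg1 x /\ reach sg sg2 x),
          (exists y, reach ta ta1 y /\ reach ta ta2 y) &
          (exists s, s \in S /\ connect (@trans_edge (prod_nfa A B)) (init (prod_nfa A B)) s)]].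

Definition has_pattern (A B : nfa Sigma) : Prop :=
  exists S sg sg1 sg2 ta ta1 ta2, @pattern A B S sg sg1 sg2 ta ta1 ta2.

(* infinite tower of prefixes between K and L (indexed from 0 instead of 1) *)
Definition infinite_tower (K L : pred (seq Sigma)) : Prop :=
  exists w : nat -> seq Sigma,
    (K (w 0) || L (w 0)) /\
    forall i, [/\ prefix (w i) (w i.+1),
                  K (w i) -> L (w i.+1) &
                  L (w i) -> K (w i.+1)].

End NFA.

(* If there is a pattern, pump the cycle of S: reading x from sigma reaches an
   A-accepting state and comes back to S, the path through S to tau followed by
   y reaches a B-accepting state and comes back to S, and so on forever; by
   disjointness the resulting words alternate between L(A) and L(B).
   Conversely, along a tower call a product state at position |w_j| good if it
   is reachable from the initial state and both of its components still lead to
   acceptance further along the tower.  Good states exist at every level and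
   have good predecessors, so Koenig's lemma yields an infinite chain of good
   states; the chain eventually stays inside one strongly connected component,
   which together with the accepting continuations of a good state is a
   pattern. *)
From mathcomp Require Import all_boot.
From Stdlib Require Import Classical ClassicalEpsilon.

Set Implicit Arguments. Unset Strict Implicit. Unset Printing Implicit Defensive.

Lemma antitone_exists_forall (T : finType) (Q : T -> nat -> Prop) :
  (forall c k k', k <= k' -> Q c k' -> Q c k) ->
  (forall k, exists c, Q c k) -> exists c, forall k, Q c k.
Proof.
move=> antiQ exQ; apply: NNPP => noc.
have [bound Hbound] : exists bound : T -> nat, forall c, ~ Q c (bound c).
  apply: (choice (fun c k => ~ Q c k)) => c.
  by apply: not_all_ex_not => Qc; apply: noc; exists c.
have [c Qc] := exQ (\max_c bound c).
by apply: (Hbound c); apply: antiQ (Qc); apply: leq_bigmax.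
Qed.

Section Konig.
Variable T : finType.
Variable V : nat -> T -> Prop.
Variable R : nat -> T -> T -> Prop.
Hypothesis V_nonempty : forall j, exists c, V j c.
Hypothesis V_pred : forall j d, V j.+1 d -> exists2 c, V j c & R j c d.

Fixpoint path_from (k j : nat) (c : T) : Prop :=
  if k is k'.+1 then V j c /\ exists2 d, R j c d & path_from k' j.+1 d else V j c.

Lemma path_fromV k j c : path_from k j c -> V j c.
Proof. by case: k => [|k] //= []. Qed.

Lemma path_from_antitone c j k k' : k <= k' -> path_from k' j c -> path_from k j c.
Proof.
elim: k' k j c => [|k' IH] [|k] j c //= kk' [Vc [d cd dpath]] //.
by split=> //; exists d => //; exact: IH kk' dpath.
Qed.

Lemma path_from_exists k j : exists c, path_from k j c.
Proof.
elim: k j => [|k IH] j; first exact: V_nonempty.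
have [d dpath] := IH j.+1; have [c Vc cd] := V_pred (path_fromV dpath).
by exists c; split=> //; exists d.
Qed.

Definition infinite_path_from j c := forall k, path_from k j c.

Lemma infinite_path_from_next j c :
  infinite_path_from j c -> exists d, R j c d /\ infinite_path_from j.+1 d.
Proof.
move=> cinf; have [d dinf] : exists d, forall k, R j c d /\ path_from k j.+1 d.
  apply: antitone_exists_forall => [d k k' kk' [cd dpath] | k].
  - by split=> //; exact: path_from_antitone kk' dpath.
  - by have [_ [d cd dpath]] := cinf k.+1; exists d.
by exists d; split=> [|k]; [exact: (dinf 0).1 | exact: (dinf k).2].
Qed.

Lemma konig_chain : exists ch : nat -> T, forall j, V j (ch j) /\ R j (ch j) (ch j.+1).
Proof.
have [c0 c0inf] : exists c, infinite_path_from 0 c.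
  apply: antitone_exists_forall => [c k k'|k]; first exact: path_from_antitone.
  exact: path_from_exists.
have step (jc : nat * T) : exists d, infinite_path_from jc.1 jc.2 ->
    R jc.1 jc.2 d /\ infinite_path_from jc.1.+1 d.
  case: jc => j c /=; have [cinf|ncinf] := classic (infinite_path_from j c).
  - by have [d cd] := infinite_path_from_next cinf; exists d.
  - by exists c => /ncinf.
have [next Hnext] := choice _ step.
pose ch := fix ch j := if j is j'.+1 then next (j', ch j') else c0.
have chinf j : infinite_path_from j (ch j).
  by elim: j => [|j IH] //; apply: (Hnext (j, ch j) IH).2.
exists ch => j; split; first exact: chinf j 0.
exact: (Hnext (j, ch j) (chinf j)).1.
Qed.

End Konig.

Lemma nat_fun_has_min (f : nat -> nat) : exists N, forall i, f N <= f i.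
Proof.
suff min_below m j : f j <= m -> exists N, forall i, f N <= f i.
  exact: min_below _ 0 (leqnn _).
elim: m j => [|m IH] j fj.
  by exists j => i; apply: leq_trans fj _.
have [[i lt_ij]|no_lt] := classic (exists i, f i < f j).
  by apply: (IH i); rewrite -ltnS (leq_trans lt_ij).
by exists j => i; rewrite leqNgt; apply/negP => lt_ij; apply: no_lt; exists i.
Qed.

Lemma connect_chain_returns (T : finType) (e : rel T) (ch : nat -> T) :
  (forall j, connect e (ch j) (ch j.+1)) ->
  exists N, forall i, N <= i -> connect e (ch i) (ch N).
Proof.
move=> step; pose succs j := [set d | connect e (ch j) d].
have succs_sub j i : j <= i -> succs i \subset succs j.
  move=> /subnKC <-; elim: (i - j) => [|m IH]; first by rewrite addn0.
  apply: subset_trans IH; apply/subsetP => d; rewrite !inE addnS.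
  exact: connect_trans (step _).
(* The successor sets shrink along the chain; once of minimal size they stop
   shrinking, so ch N is a successor of every later ch i. *)
have [N minN] := nat_fun_has_min (fun j => #|succs j|).
exists N => i Ni; have same_succs : succs i = succs N.
  by apply/eqP; rewrite eqEcard succs_sub // minN.
have : ch N \in succs N by rewrite inE connect0.
by rewrite -same_succs inE.
Qed.

Section Reachability.
Variable Sigma : finType.
Implicit Types (A : nfa Sigma) (s t : seq Sigma) (a : Sigma).

Lemma reach_nil A (p q : state A) : reach p q [::] = (q == p).
Proof. by rewrite /reach /delta_star /= in_set1. Qed.

Lemma reach1 A (p q : state A) a : reach p q [:: a] = (q \in delta p a).
Proof. by rewrite /reach /delta_star /= big_set1. Qed.

Lemma reach_rcons A (p q : state A) t a :
  reach p q (rcons t a) = [exists r, reach p r t && (q \in delta r a)].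
Proof.
rewrite /reach /delta_star foldl_rcons.
by apply/bigcupP/existsP => [[r rt qr]|[r /andP[rt qr]]]; exists r; rewrite ?rt.
Qed.

Lemma reach_cat A (p q : state A) s t :
  reach p q (s ++ t) = [exists r, reach p r s && reach r q t].
Proof.
elim/last_ind: t q => [|t a IH] q.
  rewrite cats0; apply/idP/existsP => [pq|[r /andP[pr]]].
    by exists q; rewrite pq reach_nil eqxx.
  by rewrite reach_nil => /eqP ->.
rewrite -rcons_cat reach_rcons; apply/existsP/existsP.
  move=> [r /andP[+ qr]]; rewrite IH => /existsP[m /andP[pm mr]].
  by exists m; rewrite pm reach_rcons; apply/existsP; exists r; rewrite mr.
move=> [m /andP[pm]]; rewrite reach_rcons => /existsP[r /andP[mr qr]].
by exists r; rewrite qr andbT IH; apply/existsP; exists m; rewrite pm.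
Qed.

Lemma reach_trans A (p q r : state A) s t :
  reach p q s -> reach q r t -> reach p r (s ++ t).
Proof. by move=> pq qr; rewrite reach_cat; apply/existsP; exists q; rewrite pq. Qed.

Lemma reach_cons A (p q : state A) a t :
  reach p q (a :: t) = [exists r, (r \in delta p a) && reach r q t].
Proof. by rewrite -cat1s reach_cat; apply: eq_existsb => r; rewrite reach1. Qed.

Lemma reach_connect A (p q : state A) w : reach p q w -> connect (@trans_edge _ A) p q.
Proof.
elim: w p => [|a t IH] p; first by rewrite reach_nil => /eqP ->.
rewrite reach_cons => /existsP[r /andP[pr rq]].
by apply: connect_trans (IH _ rq); apply: connect1; apply/existsP; exists a.
Qed.

Lemma connect_reach A (p q : state A) :
  connect (@trans_edge _ A) p q -> exists w, reach p q w.
Proof.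
move=> /connectP[s]; elim: s p => [|r s IH] p /=.
  by move=> _ ->; exists [::]; rewrite reach_nil.
move=> /andP[/existsP[a pr] rs] q_last; have [w rq] := IH _ rs q_last.
by exists (a :: w); rewrite reach_cons; apply/existsP; exists r; rewrite pr.
Qed.

Lemma acceptsP A w :
  reflect (exists2 f, f \in final A & reach (init A) f w) (accepts A w).
Proof. by apply: (iffP existsP) => [[f /andP[]]|[f]]; exists f => //; apply/andP. Qed.

Lemma reach_prod A (B : nfa Sigma) (p q : state (prod_nfa A B)) w :
  reach p q w = reach p.1 q.1 w && reach p.2 q.2 w.
Proof.
elim/last_ind: w q => [|t a IH] [q1 q2].
  by rewrite !reach_nil; case: p => ? ?; rewrite xpair_eqE.
rewrite !reach_rcons; apply/existsP/andP.
  move=> [[r1 r2] /andP[]]; rewrite IH /= in_setX => /andP[pr1 pr2] /andP[qr1 qr2].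
  by split; apply/existsP; [exists r1 | exists r2]; apply/andP.
move=> [/existsP[r1 /andP[pr1 qr1]] /existsP[r2 /andP[pr2 qr2]]].
by exists (r1, r2); rewrite IH /= in_setX pr1 pr2 qr1 qr2.
Qed.

Lemma scc_connect A (S : {set state A}) p q :
  is_scc S -> p \in S -> q \in S -> connect (@trans_edge _ A) p q.
Proof.
by move=> [s ->]; rewrite !inE => /andP[_ ps] /andP[sq _]; apply: connect_trans ps sq.
Qed.

End Reachability.

Section PatternTower.
Variable Sigma : finType.
Variables A B : nfa Sigma.
Notation P := (prod_nfa A B).
Hypothesis disjoint : forall w : seq Sigma, ~ (accepts A w /\ accepts B w).

Lemma pattern_tower : has_pattern A B -> infinite_tower (accepts A) (accepts B).
Proof.
move=> [S [sg [sg1 [sg2 [ta [ta1 [ta2 [Sscc _ [fin1 fin2] [sgS sg2S taS ta2S]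
  [[x [x1 x2]] [y [y1 y2]] [s0 [s0S init_s0]]]]]]]]]]].
have [z zsg] := connect_reach (connect_trans init_s0 (scc_connect Sscc s0S sgS)).
have [p sg2_ta] := connect_reach (scc_connect Sscc sg2S taS).
have [r ta2_sg] := connect_reach (scc_connect Sscc ta2S sgS).
pose fix w i := if i is i'.+1 then w i' ++ (if odd i' then r ++ x else p ++ y)
                else z ++ x.
have w_reach i : if odd i
    then reach (init P) ta1 (w i) && reach (init P) ta2 (w i)
    else reach (init P) sg1 (w i) && reach (init P) sg2 (w i).
  elim: i => [|i IH] /=; first by rewrite !(reach_trans zsg).
  case: (odd i) IH => /andP[_ reach_i] /=.
    by rewrite !(reach_trans reach_i) // !(reach_trans ta2_sg).
  by rewrite !(reach_trans reach_i) // !(reach_trans sg2_ta).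
have accA i : ~~ odd i -> accepts A (w i).
  move=> /negbTE even_i; have := w_reach i; rewrite even_i => /andP[+ _].
  by rewrite reach_prod => /andP[reachA _]; apply/acceptsP; exists sg1.1.
have accB i : odd i -> accepts B (w i).
  move=> odd_i; have := w_reach i; rewrite odd_i => /andP[+ _].
  by rewrite reach_prod => /andP[_ reachB]; apply/acceptsP; exists ta1.2.
exists w; split=> [|i]; first by rewrite accA.
split; first exact: prefix_prefix.
- case odd_i: (odd i) => accAi; first by case: (disjoint (conj accAi (accB i odd_i))).
  by apply: accB; rewrite /= odd_i.
- case odd_i: (odd i) => accBi; last by case: (disjoint (conj (accA i (negbT odd_i)) accBi)).
  by apply: accA; rewrite /= odd_i.
Qed.

End PatternTower.

Section TowerPattern.
Variable Sigma : finType.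
Variables A B : nfa Sigma.
Notation P := (prod_nfa A B).
Hypothesis disjoint : forall w : seq Sigma, ~ (accepts A w /\ accepts B w).
Variable w : nat -> seq Sigma.
Hypothesis w0_accepted : accepts A (w 0) || accepts B (w 0).
Hypothesis w_step : forall i, [/\ prefix (w i) (w i.+1),
  accepts A (w i) -> accepts B (w i.+1) & accepts B (w i) -> accepts A (w i.+1)].

Definition seg j k := drop (size (w j)) (w k).

Lemma tower_cat j k : j <= k -> w k = w j ++ seg j k.
Proof.
move=> jk; suff /prefixP[s wk] : prefix (w j) (w k) by rewrite /seg wk drop_size_cat.
move: jk => /subnKC <-; elim: (k - j) => [|m IH]; first by rewrite addn0 prefix_refl.
by rewrite addnS; apply: prefix_trans IH _; case: (w_step (j + m)).
Qed.

Lemma seg_cat j k l : j <= k -> k <= l -> seg j l = seg j k ++ seg k l.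
Proof.
by move=> jk kl; rewrite {1}/seg (tower_cat kl) (tower_cat jk) -catA drop_size_cat.
Qed.

Lemma tower_accepted i : accepts A (w i) || accepts B (w i).
Proof.
elim: i => // i /orP[accA|accB]; case: (w_step i) => _ AB BA.
  by rewrite (AB accA) orbT.
by rewrite (BA accB).
Qed.

Lemma seg_succ_neq_nil j : seg j j.+1 != [::].
Proof.
apply/eqP => seg_nil; have := tower_cat (leqnSn j); rewrite seg_nil cats0 => w_eq.
case: (w_step j) => _ AB BA; case/orP: (tower_accepted j) => acc.
  by apply: (disjoint (conj acc _)); rewrite -w_eq; apply: AB.
by apply: (disjoint (conj _ acc)); rewrite -w_eq; apply: BA.
Qed.

Lemma accepted_laterA j : exists2 i, j <= i & accepts A (w i).
Proof.
case/orP: (tower_accepted j) => acc; first by exists j.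
by exists j.+1 => //; case: (w_step j) => _ _ BA; apply: BA.
Qed.

Lemma accepted_laterB j : exists2 i, j <= i & accepts B (w i).
Proof.
case/orP: (tower_accepted j) => acc; last by exists j.
by exists j.+1 => //; case: (w_step j) => _ AB _; apply: AB.
Qed.

Definition leads_to_final (C : nfa Sigma) j (c : state C) :=
  exists2 i, j <= i & exists2 f, f \in final C & reach c f (seg j i).

Lemma leads_to_final_pred (C : nfa Sigma) j k (c d : state C) :
  j <= k -> reach c d (seg j k) -> leads_to_final k d -> leads_to_final j c.
Proof.
move=> jk cd [i ki [f ffin df]]; exists i; first exact: leq_trans ki.
by exists f; rewrite // (seg_cat jk ki); apply: reach_trans cd df.
Qed.

Lemma accepted_split (C : nfa Sigma) j i : j <= i -> accepts C (w i) ->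
  exists2 c, reach (init C) c (w j) & leads_to_final j c.
Proof.
move=> ji /acceptsP[f ffin]; rewrite (tower_cat ji) reach_cat => /existsP[c /andP[initc cf]].
by exists c => //; exists i => //; exists f.
Qed.

Definition good j (c : state P) :=
  [/\ reach (init P) c (w j), leads_to_final j c.1 & leads_to_final j c.2].

Lemma good_exists j : exists c, good j c.
Proof.
have [i ji /(accepted_split ji)[a inita aA]] := accepted_laterA j.
have [i' ji' /(accepted_split ji')[b initb bB]] := accepted_laterB j.
by exists (a, b); split; rewrite // reach_prod inita initb.
Qed.

Lemma good_has_pred j d : good j.+1 d -> exists2 c, good j c & reach c d (seg j j.+1).
Proof.
move=> [+ dA dB]; rewrite (tower_cat (leqnSn j)) reach_cat => /existsP[c /andP[initc cd]].
exists c => //; move: (cd); rewrite reach_prod => /andP[cd1 cd2].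
by split=> //; [apply: leads_to_final_pred cd1 dA | apply: leads_to_final_pred cd2 dB].
Qed.

Lemma tower_pattern : has_pattern A B.
Proof.
have [ch chP] := konig_chain good_exists good_has_pred.
have ch_reach j k : j <= k -> reach (ch j) (ch k) (seg j k).
  move=> /subnKC <-; elim: (k - j) => [|m IH].
    by rewrite addn0 /seg drop_size reach_nil.
  by rewrite addnS (seg_cat (leq_addr m j) (leqnSn _)); apply: reach_trans IH (chP _).2.
pose e := @trans_edge _ P.
have [N back] := connect_chain_returns (fun j => reach_connect (chP j).2).
pose S := [set v | connect e (ch N) v && connect e v (ch N)].
have inS i : N <= i -> ch i \in S.
  by move=> Ni; rewrite inE back // andbT; apply: reach_connect (ch_reach _ _ Ni).
have [[init_N [i Ni [fA fAfin fA_reach]] [i' Ni' [fB fBfin fB_reach]]] _] := chP N.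
(* The segment after w N is nonempty by disjointness; its first letter gives
   an edge inside S. *)
have [r Nr rN] : exists2 r, e (ch N) r & connect e r (ch N).
  move: (chP N).2 (seg_succ_neq_nil N); case: (seg N N.+1) => [|a t] // + _.
  rewrite reach_cons => /existsP[r /andP[Nr rN1]].
  by exists r; [apply/existsP; exists a | apply: connect_trans (reach_connect rN1) (back _ _)].
exists S, (ch N), (fA, (ch i).2), (ch i), (ch N), ((ch i').1, fB), (ch i'); split.
- by exists (ch N).
- exists (ch N), r; split=> //; first exact: inS.
  by rewrite inE rN connect1.
- by [].
- by rewrite !inS.
- split.
  + exists (seg N i); split; last exact: ch_reach.
    by move: (ch_reach _ _ Ni); rewrite !reach_prod /= fA_reach => /andP[_ ->].
  + exists (seg N i'); split; last exact: ch_reach.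
    by move: (ch_reach _ _ Ni'); rewrite !reach_prod /= fB_reach => /andP[-> _].
  + by exists (ch N); split; [rewrite inS | apply: reach_connect init_N].
Qed.

End TowerPattern.

Theorem theorem18 (Sigma : finType) (A B : nfa Sigma) :
  (forall w : seq Sigma, ~ (accepts A w /\ accepts B w)) ->
  (has_pattern A B <-> infinite_tower (accepts A) (accepts B)).
Proof.
move=> disjoint; split; first exact: pattern_tower.
by move=> [w [w0 w_step]]; apply: tower_pattern w0 w_step.
Qed.
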